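(* Assume the target tube $\mathscr{T}_N$ is closed, $\mathcal{U}$ is compact, and each $f_k$ is continuous on $\mathcal{X}\times\mathcal{U}$. Let $\mathcal{E}\subseteq\mathcal{W}$ be a measurable set with $\mathbb{P}_w(w\in\mathcal{E})>0$, and let $\pi^\ast\in\mathcal{M}$ be the Markov policy built from Borel-measurable minimizers $\mu_k^\ast$ of the min-max recursion $J_N^\ast=g_N$, $J_k^\ast(x)=\inf_{u\in\mathcal{U}}\sup_{w\in\mathcal{E}}[J^\ast_{k+1}(f_k(x,u)+w)+g_k(x)]$, $g_k=1-\mathbf{1}_{\mathcal{T}_k}$. Then for every $k\in\mathbb{N}_{[0,N-1]}$ and every $y\in\mathcal{R}_k(\mathscr{T}_N,\mathcal{E})$, $$\mathbb{P}^{\pi^\ast}_{k}\Big(\bigcap_{t=k+1}^N\{x_t\in\mathcal{T}_t\}\ \Big|\ x_k=y,\ (w_k,\dots,w_{N-1})\in\mathcal{E}^{N-k}\Big)=1.$$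
   Context: Fix $N\in\mathbb{N}$, $N>0$, and write $\mathbb{N}_{[a,b]}=\{a,a+1,\dots,b\}$. Consider the discrete-time system $x_{k+1}=f_k(x_k,u_k)+w_k$, $k=0,\dots,N-1$, with state $x_k\in\mathcal{X}\subseteq\mathbb{R}^n$, input $u_k\in\mathcal{U}\subseteq\mathbb{R}^m$, disturbance $w_k\in\mathcal{W}\subseteq\mathbb{R}^n$ with $0\in\mathcal{W}$, and $f_k:\mathcal{X}\times\mathcal{U}\to\mathcal{X}$. A target tube is a sequence $\mathscr{T}_N=[\mathcal{T}_0,\dots,\mathcal{T}_N]$ of subsets of $\mathcal{X}$; it is called closed (resp. convex) if every $\mathcal{T}_k$ is closed (resp. convex). $\mathbf{1}_S$ denotes the indicator function of a set $S$. In the stochastic setting, $w_0,\dots,w_{N-1}$ are i.i.d. random vectors with an absolutely continuous distribution $\mathbb{P}_w$ on $\mathcal{W}$. A Markov policy is a tuple $\pi=[\mu_0,\dots,\mu_{N-1}]$ of universally measurable maps $\mu_k:\mathcal{X}\to\mathcal{U}$; $\mathcal{M}$ denotes the set of Markov policies. For $\pi\in\mathcal{M}$ and $x_k=y$, $\mathbb{P}^\pi_k(\cdot\,|\,y)$ denotes the probability law of $(x_{k+1},\dots,x_N)$ generated by $x_{t+1}=f_t(x_t,\mu_t(x_t))+w_t$. For $\mathcal{E}\subseteq\mathcal{W}$ and $k\in\mathbb{N}_{[0,N-1]}$, the disturbance minimal reach set $\mathcal{R}_k(\mathscr{T}_N,\mathcal{E})$ is the set of $x_k\in\mathcal{T}_k$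 for which there exist state-feedback laws $\nu_t:\mathcal{X}\to\mathcal{U}$, $t\in\mathbb{N}_{[k,N-1]}$ (no measurability required), such that for every disturbance sequence $w_k,\dots,w_{N-1}\in\mathcal{E}$ the trajectory $x_{t+1}=f_t(x_t,\nu_t(x_t))+w_t$ satisfies $x_t\in\mathcal{T}_t$ for all $t\in\mathbb{N}_{[k+1,N]}$; also $\mathcal{R}_N(\mathscr{T}_N,\mathcal{E})=\mathcal{T}_N$. *)

From HB Require Import structures.
From mathcomp Require Import all_boot all_order all_algebra.
From mathcomp Require Import all_classical all_reals all_analysis.
Set Implicit Arguments. Unset Strict Implicit. Unset Printing Implicit Defensive.
Import Order.TTheory GRing.Theory Num.Theory.
Import numFieldNormedType.Exports.
Local Open Scope classical_set_scope.
Local Open Scope ring_scope.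

(* R^n is represented by row vectors 'rV[R]_n, with the (product/normed)
   topology of matrix_normedtype. *)

Definition Bvec (R : realType) (n : nat) := g_sigma_algebraType (@open 'rV[R]_n).

Definition borel_set (R : realType) (n : nat) (A : set 'rV[R]_n) : Prop :=
  @measurable _ (Bvec R n) A.

Definition borel_fun (R : realType) (n m : nat) (h : 'rV[R]_n -> 'rV[R]_m) : Prop :=
  @measurable_fun _ _ (Bvec R n) (Bvec R m) setT h.

Definition random_vector (R : realType) (d : measure_display) (Om : measurableType d)
  (n : nat) (X : Om -> 'rV[R]_n) : Prop :=
  @measurable_fun _ _ Om (Bvec R n) setT X.

Definition box (R : realType) (n : nat) (a b : 'rV[R]_n) : set 'rV[R]_n :=
  [set x | forall i, a 0 i <= x 0 i <= b 0 i].

Definition box_vol (R : realType) (n : nat) (a b : 'rV[R]_n) : R :=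
  \prod_(i < n) (b 0 i - a 0 i).

Definition lebesgue_null (R : realType) (n : nat) (A : set 'rV[R]_n) : Prop :=
  forall eps : R, 0 < eps ->
    exists a b : nat -> 'rV[R]_n,
      (forall j i, a j 0 i <= b j 0 i) /\
      A `<=` \bigcup_j box (a j) (b j) /\
      (\sum_(0 <= j <oo) (box_vol (a j) (b j))%:E < eps%:E)%E.

Definition abs_continuous (R : realType) (n : nat) (Pw : probability (Bvec R n) R) : Prop :=
  forall A : set 'rV[R]_n, borel_set A -> lebesgue_null A -> Pw A = 0%E.

Definition iid_disturbances (R : realType) (d : measure_display) (Om : measurableType d)
  (P : probability Om R) (n N : nat) (w : nat -> Om -> 'rV[R]_n)
  (Pw : probability (Bvec R n) R) : Prop :=
  (forall t, (t < N)%N -> random_vector (w t)) /\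
  (forall t (A : set 'rV[R]_n), (t < N)%N -> borel_set A -> P (w t @^-1` A) = Pw A) /\
  (forall (s : seq nat) (A : nat -> set 'rV[R]_n),
      uniq s -> all (fun t => t < N)%N s -> (forall t, borel_set (A t)) ->
      P (\big[setI/setT]_(t <- s) (w t @^-1` A t)) =
        (\prod_(t <- s) P (w t @^-1` A t))%E).

(* closed-loop trajectory: state at time k + j, starting from x_k = y, under
   feedback laws mu_t and disturbance sequence ws *)
Fixpoint traj (R : realType) (n m : nat)
  (f : nat -> 'rV[R]_n -> 'rV[R]_m -> 'rV[R]_n) (mu : nat -> 'rV[R]_n -> 'rV[R]_m)
  (k : nat) (y : 'rV[R]_n) (ws : nat -> 'rV[R]_n) (j : nat) : 'rV[R]_n :=
  match j with
  | 0 => y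
  | j'.+1 => let x := traj f mu k y ws j' in
             f (k + j')%N x (mu (k + j')%N x) + ws (k + j')%N
  end.

Definition reach_set (R : realType) (n m : nat) (X : set 'rV[R]_n) (U : set 'rV[R]_m)
  (f : nat -> 'rV[R]_n -> 'rV[R]_m -> 'rV[R]_n) (N : nat) (T : nat -> set 'rV[R]_n)
  (E : set 'rV[R]_n) (k : nat) : set 'rV[R]_n :=
  if (k < N)%N then
    [set y | T k y /\
      exists nu : nat -> 'rV[R]_n -> 'rV[R]_m,
        (forall t x, X x -> U (nu t x)) /\
        forall ws : nat -> 'rV[R]_n, (forall t, (k <= t < N)%N -> E (ws t)) ->
          forall t, (k < t <= N)%N -> T t (traj f nu k y ws (t - k))]
  else T N.

Definition stage_cost (R : realType) (n : nat) (T : nat -> set 'rV[R]_n) (k : nat)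
  (x : 'rV[R]_n) : R := 1 - \1_(T k) x.

(* min-max recursion, indexed by the number j of remaining steps (k = N - j) *)
Fixpoint Jrev (R : realType) (n m : nat) (U : set 'rV[R]_m)
  (f : nat -> 'rV[R]_n -> 'rV[R]_m -> 'rV[R]_n) (N : nat) (T : nat -> set 'rV[R]_n)
  (E : set 'rV[R]_n) (j : nat) (x : 'rV[R]_n) : \bar R :=
  match j with
  | 0 => (stage_cost T N x)%:E
  | j'.+1 =>
      ereal_inf [set ereal_sup
                   [set (Jrev U f N T E j' (f (N - j)%N x u + w) + (stage_cost T (N - j)%N x)%:E)%E
                   | w in E]
                | u in U]
  end.

Definition Jstar (R : realType) (n m : nat) (U : set 'rV[R]_m)
  (f : nat -> 'rV[R]_n -> 'rV[R]_m -> 'rV[R]_n) (N : nat) (T : nat -> set 'rV[R]_n)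
  (E : set 'rV[R]_n) (k : nat) : 'rV[R]_n -> \bar R :=
  Jrev U f N T E (N - k).

Definition cond_prob (R : realType) (d : measure_display) (Om : measurableType d)
  (P : probability Om R) (A B : set Om) : R :=
  fine (P (A `&` B)) / fine (P B).

From HB Require Import structures.
From mathcomp Require Import all_boot all_order all_algebra.
From mathcomp Require Import all_classical all_reals all_analysis.
From mathcomp Require Import zify.
Set Implicit Arguments. Unset Strict Implicit. Unset Printing Implicit Defensive.
Import Order.TTheory GRing.Theory Num.Theory.
Import numFieldNormedType.Exports.
Local Open Scope classical_set_scope.
Local Open Scope ring_scope.

(* Since [g_k >= 0], the value function satisfies [J*_k >= g_k >= 0], so
   [J*_k(x) <= 0] holds exactly when [x] can be kept in the tube against every
   disturbance in [E]: a reachable [y] has [J*_k(y) <= 0], and a minimizer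
   [mu_k] of the recursion maps any state with [J*_k <= 0] into states with
   [J*_(k+1) <= 0].  Hence every closed-loop trajectory of [pi*] driven by
   disturbances in [E] stays in the tube, so the event to be measured contains
   the conditioning event, whose probability [Pw(E)^(N-k)] is positive. *)

Lemma stage_cost_ge0 (R : realType) (n : nat) (T : nat -> set 'rV[R]_n) k x :
  0 <= stage_cost T k x.
Proof. by rewrite /stage_cost indicE; case: (x \in T k); rewrite ?subrr ?subr0. Qed.

Lemma stage_cost_eq0 (R : realType) (n : nat) (T : nat -> set 'rV[R]_n) k x :
  T k x -> stage_cost T k x = 0.
Proof. by move=> Tkx; rewrite /stage_cost indicE mem_set ?subrr. Qed.

Lemma mem_stage_cost_le0 (R : realType) (n : nat) (T : nat -> set 'rV[R]_n) k x :
  stage_cost T k x <= 0 -> T k x.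
Proof.
rewrite /stage_cost indicE; case: (boolP (x \in T k)); first by rewrite inE.
by rewrite subr0 ler10.
Qed.

Lemma traj_shift (R : realType) (n m : nat)
  (f : nat -> 'rV[R]_n -> 'rV[R]_m -> 'rV[R]_n) (mu : nat -> 'rV[R]_n -> 'rV[R]_m)
  k y (ws ws' : nat -> 'rV[R]_n) :
  (forall t, (k < t)%N -> ws t = ws' t) ->
  forall j, traj f mu k y ws j.+1 = traj f mu k.+1 (f k y (mu k y) + ws k) ws' j.
Proof.
move=> eq_ws; elim=> [|j IHj]; first by rewrite /= addn0.
rewrite -[LHS]/(let x := traj f mu k y ws j.+1 in
  f (k + j.+1)%N x (mu (k + j.+1)%N x) + ws (k + j.+1)%N).
rewrite IHj (eq_ws (k + j.+1)%N); last by lia.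
by rewrite -addSnnS.
Qed.

Section MinMaxReachability.
Variables (R : realType) (n m N : nat).
Variables (X : set 'rV[R]_n) (U : set 'rV[R]_m).
Variable f : nat -> 'rV[R]_n -> 'rV[R]_m -> 'rV[R]_n.
Variables (T : nat -> set 'rV[R]_n) (E : set 'rV[R]_n).

Local Notation J := (Jstar U f N T E).
Local Notation Reach := (reach_set X U f N T E).

Lemma Jstar_N x : J N x = (stage_cost T N x)%:E.
Proof. by rewrite /Jstar subnn. Qed.

Lemma Jstar_S k x : (k < N)%N ->
  J k x = ereal_inf [set ereal_sup
      [set (J k.+1 (f k x u + w) + (stage_cost T k x)%:E)%E | w in E] | u in U].
Proof.
move=> kN; rewrite /Jstar.
have -> : (N - k = (N - k.+1).+1)%N by lia.
by rewrite /= (_ : (N - (N - k.+1).+1 = k)%N) //; lia.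
Qed.

Hypothesis E_neq0 : E !=set0.

Lemma Jrev_ge0 j x : (0 <= Jrev U f N T E j x)%E.
Proof.
have [w0 Ew0] := E_neq0.
elim: j x => [|j IHj] x /=; first by rewrite lee_fin stage_cost_ge0.
apply: le_ereal_inf_tmp => _ [u Uu <-].
apply: le_trans (ereal_sup_ubound _); last by exists w0.
by rewrite adde_ge0 // lee_fin stage_cost_ge0.
Qed.

Lemma stage_cost_le_Jstar k x : (k <= N)%N -> ((stage_cost T k x)%:E <= J k x)%E.
Proof.
have [w0 Ew0] := E_neq0.
rewrite leq_eqVlt => /orP[/eqP-> | kN]; first by rewrite Jstar_N.
rewrite Jstar_S //; apply: le_ereal_inf_tmp => _ [u Uu <-].
apply: le_trans (ereal_sup_ubound _); last by exists w0.
by rewrite leeDr //; apply: Jrev_ge0.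
Qed.

Lemma mem_Jstar_le0 k x : (k <= N)%N -> (J k x <= 0)%E -> T k x.
Proof.
move=> kN Jle0; apply: mem_stage_cost_le0.
by rewrite -lee_fin (le_trans (stage_cost_le_Jstar x kN)).
Qed.

Hypothesis T_subX : forall k, (k <= N)%N -> T k `<=` X.

Lemma reach_set_sub k : (k <= N)%N -> Reach k `<=` T k.
Proof.
rewrite /reach_set leq_eqVlt => /orP[/eqP-> | ->]; first by rewrite ltnn.
by move=> y [].
Qed.

(* The witness [nu] of [Reach k y] also witnesses reachability of every
   successor: the first disturbance only enters through the state it produces. *)
Lemma reach_set_step k y : (k < N)%N -> Reach k y ->
  exists2 u, U u & forall v, E v -> Reach k.+1 (f k y u + v).
Proof.
move=> kN; rewrite {1}/reach_set kN => -[Tky [nu [nuU safe]]].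
exists (nu k y); first exact: nuU _ _ (T_subX (ltnW kN) Tky).
move=> v Ev.
have Tnext : T k.+1 (f k y (nu k y) + v).
  have := safe (fun=> v) (fun _ _ => Ev) k.+1; rewrite subSnn /= addn0; apply; lia.
rewrite /reach_set; case: ifP => [kN' | /negbT]; last first.
  by rewrite -leqNgt => /(conj kN)/andP/anti_leq <-.
split=> //; exists nu; split=> // ws' Ews' t kt.
pose ws s := if s == k then v else ws' s.
have Ews s : (k <= s < N)%N -> E (ws s).
  by rewrite /ws; case: eqP => // sk ks; apply: Ews'; lia.
have := safe ws Ews t ltac:(lia).
rewrite (_ : (t - k = (t - k.+1).+1)%N); last by lia.
rewrite (traj_shift f nu y (ws' := ws')) /ws ?eqxx // => s ks.
by case: eqP => // ?; lia.
Qed.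

Lemma reach_set_Jstar_le0 k y : (k <= N)%N -> Reach k y -> (J k y <= 0)%E.
Proof.
move Ej : (N - k)%N => j; elim: j k Ej y => [|j IHj] k Ej y kN.
  have -> : k = N by lia.
  by rewrite /reach_set ltnn Jstar_N => /stage_cost_eq0 ->.
have kN' : (k < N)%N by lia.
move=> reach_y; have [u Uu reach_next] := reach_set_step kN' reach_y.
rewrite Jstar_S //; apply: le_trans (ereal_inf_lbound _) _; first by exists u.
apply: ge_ereal_sup => _ [v Ev <-].
rewrite stage_cost_eq0 ?adde0; last exact: (reach_set_sub (ltnW kN') reach_y).
by apply: IHj; [lia | lia | exact: reach_next].
Qed.

Hypothesis f_XE : forall k x u v, X x -> U u -> E v -> X (f k x u + v).
Variable mu : nat -> 'rV[R]_n -> 'rV[R]_m.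
Hypothesis mu_minimizer : forall k x, (k < N)%N -> X x ->
  U (mu k x) /\
  J k x = ereal_sup [set (J k.+1 (f k x (mu k x) + v) + (stage_cost T k x)%:E)%E | v in E].

Lemma Jstar_le0_minimizer_step k x v : (k < N)%N -> X x -> (J k x <= 0)%E -> E v ->
  X (f k x (mu k x) + v) /\ (J k.+1 (f k x (mu k x) + v) <= 0)%E.
Proof.
move=> kN Xx Jle0 Ev; have [Umu Jk] := mu_minimizer kN Xx.
split; first exact: f_XE.
apply: le_trans _ Jle0; rewrite Jk.
apply: le_trans (ereal_sup_ubound _); last by exists v.
by rewrite leeDl // lee_fin stage_cost_ge0.
Qed.

Lemma reach_set_traj_safe k y ws : (k < N)%N -> Reach k y ->
  (forall t, (k <= t < N)%N -> E (ws t)) ->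
  forall t, (k < t <= N)%N -> T t (traj f mu k y ws (t - k)).
Proof.
move=> kN reach_y Ews.
have inv j : (k + j <= N)%N ->
    X (traj f mu k y ws j) /\ (J (k + j) (traj f mu k y ws j) <= 0)%E.
  elim: j => [|j IHj] kjN.
    rewrite addn0; split; last exact: reach_set_Jstar_le0 (ltnW kN) reach_y.
    exact: (T_subX (ltnW kN) (reach_set_sub (ltnW kN) reach_y)).
  have [Xx Jx] := IHj ltac:(lia).
  rewrite addnS; apply: Jstar_le0_minimizer_step => //; first by lia.
  by apply: Ews; lia.
move=> t kt; have [_] := inv (t - k)%N ltac:(lia).
by rewrite subnKC; [apply: mem_Jstar_le0 | ]; lia.
Qed.

End MinMaxReachability.

Lemma iid_prob_all_in (R : realType) (d : measure_display) (Om : measurableType d)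
  (P : probability Om R) (n N : nat) (w : nat -> Om -> 'rV[R]_n)
  (Pw : probability (Bvec R n) R) (E : set 'rV[R]_n) k :
  iid_disturbances P N w Pw -> borel_set E ->
  P [set om | forall t, (k <= t < N)%N -> E (w t om)] = (fine (Pw E) ^+ (N - k))%:E.
Proof.
move=> [_ [law indep]] mE.
have -> : [set om | forall t, (k <= t < N)%N -> E (w t om)] =
    \big[setI/setT]_(k <= t < N) (w t @^-1` E).
  rewrite -bigcap_seq; apply/seteqP; split=> om /= Eom t tkN; apply: Eom;
    by move: tkN; rewrite /= ?inE mem_index_iota.
rewrite indep ?iota_uniq //; last first.
  by apply/allP => t; rewrite mem_index_iota => /andP[].
rewrite -prodr_const_nat -prodEFin; apply: eq_big_nat => t /andP[_ tN].
by rewrite law // fineK // fin_num_measure.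
Qed.

Lemma cond_prob_supset (R : realType) (d : measure_display) (Om : measurableType d)
  (P : probability Om R) (A B : set Om) :
  B `<=` A -> fine (P B) != 0 -> cond_prob P A B = 1.
Proof. by move=> BA PB0; rewrite /cond_prob setIidr // divff. Qed.

Theorem proposition1
  (R : realType) (n m N : nat)
  (X : set 'rV[R]_n) (U : set 'rV[R]_m) (W : set 'rV[R]_n)
  (f : nat -> 'rV[R]_n -> 'rV[R]_m -> 'rV[R]_n)
  (T : nat -> set 'rV[R]_n)
  (d : measure_display) (Om : measurableType d) (P : probability Om R)
  (w : nat -> Om -> 'rV[R]_n) (Pw : probability (Bvec R n) R)
  (E : set 'rV[R]_n) (mu : nat -> 'rV[R]_n -> 'rV[R]_m) :
  (0 < N)%N ->
  (* standing assumptions on the system *)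
  W 0 ->
  (forall k x u, X x -> U u -> X (f k x u)) ->
  (forall k x u v, X x -> U u -> W v -> X (f k x u + v)) ->
  (forall k, (k <= N)%N -> T k `<=` X) ->
  (* i.i.d. absolutely continuous disturbances with law Pw on W *)
  borel_set W -> Pw W = 1%E -> abs_continuous Pw ->
  iid_disturbances P N w Pw ->
  (* hypotheses of the proposition *)
  (forall k, (k <= N)%N -> closed (T k)) ->
  compact U ->
  (forall k, (k < N)%N -> {within X `*` U, continuous (fun p => f k p.1 p.2)}) ->
  E `<=` W -> borel_set E -> (0 < Pw E)%E ->
  (* pi* = [mu_0, ..., mu_{N-1}] : Borel-measurable minimizers of the min-max recursion *)
  (forall k, (k < N)%N -> borel_fun (mu k)) ->
  (forall k x, (k < N)%N -> X x ->
     U (mu k x) /\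
     Jstar U f N T E k x =
       ereal_sup [set (Jstar U f N T E k.+1 (f k x (mu k x) + v) + (stage_cost T k x)%:E)%E
                 | v in E]) ->
  forall k, (k < N)%N ->
  forall y, reach_set X U f N T E k y ->
  cond_prob P
    [set om | forall t, (k < t <= N)%N -> T t (traj f mu k y (fun s => w s om) (t - k))]
    [set om | forall t, (k <= t < N)%N -> E (w t om)]
  = 1.
Proof.
(* Closedness, compactness, continuity and measurability only serve, in the
   paper, to guarantee that Borel minimizers [mu] exist; here they are given. *)
move=> _ _ _ f_XW T_subX _ _ _ iid_w _ _ _ E_subW mE PwE_gt0 _ mu_min k kN y reach_y.
have E_neq0 : E !=set0.
  by apply/set0P; apply: contraTneq PwE_gt0 => ->; rewrite measure0 ltxx.
have f_XE k' x u v : X x -> U u -> E v -> X (f k' x u + v).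
  by move=> Xx Uu /E_subW; apply: f_XW.
apply: cond_prob_supset => [om Eom|].
  exact: (reach_set_traj_safe E_neq0 T_subX f_XE mu_min kN reach_y Eom).
rewrite (iid_prob_all_in _ iid_w mE) /= expf_neq0 // gt_eqF // fine_gt0 //.
by rewrite PwE_gt0 ltey_eq fin_num_measure.
Qed.
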